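(* For all closed terms $t_0,t_0'$, if $t_0\to t_0'$ then $t_0\approx_{\emptyset}t_0'$.
   Context: Terms of $\lambda_S$: $t ::= x \mid \lambda x.t \mid t\,t \mid \mathcal{S}k.t \mid \langle t\rangle$ (shift binds $k$; $\langle\cdot\rangle$ reset), up to $\alpha$-conversion. Values $v::=\lambda x.t$. Pure contexts $E ::= \Box \mid v\,E \mid E\,t$; evaluation contexts $F ::= \Box \mid v\,F \mid F\,t \mid \langle F\rangle$. Reduction: $F[(\lambda x.t)v]\to F[t\{v/x\}]$; $F[\langle E[\mathcal Sk.t]\rangle]\to F[\langle t\{\lambda x.\langle E[x]\rangle/k\}\rangle]$ ($x\notin\mathrm{fv}(E)$); $F[\langle v\rangle]\to F[v]$; $\to^*$ reflexive-transitive closure. Stuck: not a value and irreducible; normal form: value or stuck. Closures: for $R$ a relation on closed terms, $\widetilde R$ is the smallest relation containing $R$, all $(x,x)$, closed under all term constructors, restricted to closed terms; $\widehat R$ is the smallest relation on closed evaluation contexts with $\Box\widehat R\Box$, $v_0F_0\widehat Rv_1F_1$ if $F_0\widehat RF_1,v_0\widetilde Rv_1$; $F_0t_0\widehat RF_1t_1$ if $F_0\widehat RF_1,t_0\widetilde Rt_1$; $\langle F_0\rangle\widehat R\langle F_1\rangle$ if $F_0\widehat RF_1$. An environment $\mathcal E$ is a relation on closed normal forms relating values only with values and stuck terms only with stuck terms; an environmental relation $\mathcal X$ is a set of environments and triples $(\mathcal E,t_0,t_1)$ with $t_0,t_1$ closed, written $t_0\mathcal X_{\mathcal E}t_1$.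 $\mathcal X$ is an environmental bisimulation if (1) whenever $t_0\mathcal X_{\mathcal E}t_1$: (a) $t_0\to t_0'$ implies $t_1\to^*t_1'$ with $t_0'\mathcal X_{\mathcal E}t_1'$; (b) if $t_0$ is a value $v_0$ then $t_1\to^*v_1$ with $\mathcal E\cup\{(v_0,v_1)\}\in\mathcal X$; (c) if $t_0$ is stuck then $t_1\to^*t_1'$ stuck with $\mathcal E\cup\{(t_0,t_1')\}\in\mathcal X$; (d) symmetric conditions; (2) whenever $\mathcal E\in\mathcal X$: (a) $(\lambda x.t_0)\mathcal E(\lambda x.t_1)$, $v_0\widetilde{\mathcal E}v_1$ imply $t_0\{v_0/x\}\mathcal X_{\mathcal E}t_1\{v_1/x\}$; (b) $E_0[\mathcal Sk.t_0]\mathcal EE_1[\mathcal Sk.t_1]$, pure $E_0'\widehat{\mathcal E}E_1'$ imply $\langle t_0\{\lambda x.\langle E_0'[E_0[x]]\rangle/k\}\rangle\mathcal X_{\mathcal E}\langle t_1\{\lambda x.\langle E_1'[E_1[x]]\rangle/k\}\rangle$ ($x$ fresh). $\approx$ is the largest environmental bisimulation; $t_0\approx_{\emptyset}t_1$ means $(\emptyset,t_0,t_1)\in\approx$. *)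

From Stdlib Require Import Arith Relations.

(** Terms: de Bruijn indices (alpha-conversion is built in).
    [Lam t] binds index 0 in t; [Shift t] binds k as index 0 in t. *)
Inductive term : Type :=
| Var (n : nat)
| Lam (t : term)
| App (t u : term)
| Shift (t : term)
| Reset (t : term).

Fixpoint lift (k : nat) (t : term) : term :=
  match t with
  | Var n => if Nat.ltb n k then Var n else Var (S n)
  | Lam b => Lam (lift (S k) b)
  | App a b => App (lift k a) (lift k b)
  | Shift b => Shift (lift (S k) b)
  | Reset b => Reset (lift k b)
  end.

(** [subst k v t]: substitute v for index k in t (v given at depth k),
    decrementing indices above k.  t{v/x} for the binder x is [subst 0 v t]. *)
Fixpoint subst (k : nat) (v : term) (t : term) : term :=
  match t with
  | Var n => if Nat.ltb n k then Var n
             else if Nat.eqb n k then v else Var (pred n)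
  | Lam b => Lam (subst (S k) (lift 0 v) b)
  | App a b => App (subst k v a) (subst k v b)
  | Shift b => Shift (subst (S k) (lift 0 v) b)
  | Reset b => Reset (subst k v b)
  end.

Fixpoint wf (n : nat) (t : term) : Prop :=
  match t with
  | Var m => m < n
  | Lam b => wf (S n) b
  | App a b => wf n a /\ wf n b
  | Shift b => wf (S n) b
  | Reset b => wf n b
  end.

Definition closed (t : term) : Prop := wf 0 t.

Definition is_value (t : term) : Prop := exists b, t = Lam b.

(** Evaluation contexts F ::= [] | v F | F t | <F>;  [CAppR b F] is (Lam b) F.
    Pure contexts E are those with no [CReset]. *)
Inductive ctx : Type :=
| Hole
| CAppR (b : term) (F : ctx)
| CAppL (F : ctx) (t : term)
| CReset (F : ctx).

Fixpoint plug (F : ctx) (t : term) : term :=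
  match F with
  | Hole => t
  | CAppR b F' => App (Lam b) (plug F' t)
  | CAppL F' u => App (plug F' t) u
  | CReset F' => Reset (plug F' t)
  end.

Fixpoint pure (F : ctx) : Prop :=
  match F with
  | Hole => True
  | CAppR _ F' => pure F'
  | CAppL F' _ => pure F'
  | CReset _ => False
  end.

Fixpoint liftc (k : nat) (F : ctx) : ctx :=
  match F with
  | Hole => Hole
  | CAppR b F' => CAppR (lift (S k) b) (liftc k F')
  | CAppL F' u => CAppL (liftc k F') (lift k u)
  | CReset F' => CReset (liftc k F')
  end.

Inductive step : term -> term -> Prop :=
| step_beta : forall F t b,
    step (plug F (App (Lam t) (Lam b))) (plug F (subst 0 (Lam b) t))
| step_shift : forall F E t, pure E ->
    step (plug F (Reset (plug E (Shift t))))
         (plug F (Reset (subst 0 (Lam (Reset (plug (liftc 0 E) (Var 0)))) t)))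
| step_reset : forall F b,
    step (plug F (Reset (Lam b))) (plug F (Lam b)).

Definition steps : term -> term -> Prop := clos_refl_trans term step.

Definition stuck (t : term) : Prop := ~ is_value t /\ forall t', ~ step t t'.
Definition normal (t : term) : Prop := is_value t \/ stuck t.

Definition Relation := term -> term -> Prop.

Definition is_env (E : Relation) : Prop :=
  forall a b, E a b ->
    closed a /\ closed b /\ normal a /\ normal b /\
    ((is_value a /\ is_value b) \/ (stuck a /\ stuck b)).

Inductive tclo (R : Relation) : term -> term -> Prop :=
| tc_R : forall a b, R a b -> tclo R a b
| tc_var : forall n, tclo R (Var n) (Var n)
| tc_lam : forall a b, tclo R a b -> tclo R (Lam a) (Lam b)
| tc_app : forall a a' b b', tclo R a b -> tclo R a' b' -> tclo R (App a a') (App b b')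
| tc_shift : forall a b, tclo R a b -> tclo R (Shift a) (Shift b)
| tc_reset : forall a b, tclo R a b -> tclo R (Reset a) (Reset b).

Definition tilde (R : Relation) (a b : term) : Prop :=
  tclo R a b /\ closed a /\ closed b.

Inductive hat (R : Relation) : ctx -> ctx -> Prop :=
| hat_hole : hat R Hole Hole
| hat_appR : forall b0 b1 F0 F1,
    hat R F0 F1 -> tilde R (Lam b0) (Lam b1) -> hat R (CAppR b0 F0) (CAppR b1 F1)
| hat_appL : forall F0 F1 t0 t1,
    hat R F0 F1 -> tilde R t0 t1 -> hat R (CAppL F0 t0) (CAppL F1 t1)
| hat_reset : forall F0 F1, hat R F0 F1 -> hat R (CReset F0) (CReset F1).

Record envrel : Type := {
  X_env : Relation -> Prop;
  X_tri : Relation -> term -> term -> Prop }.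

Definition is_envrel (X : envrel) : Prop :=
  (forall E, X_env X E -> is_env E) /\
  (forall E t0 t1, X_tri X E t0 t1 -> is_env E /\ closed t0 /\ closed t1).

Definition ext (E : Relation) (a0 a1 : term) : Relation :=
  fun a b => E a b \/ (a = a0 /\ b = a1).

Definition env_bisim (X : envrel) : Prop :=
  is_envrel X /\
  (forall E t0 t1, X_tri X E t0 t1 ->
     (forall t0', step t0 t0' -> exists t1', steps t1 t1' /\ X_tri X E t0' t1') /\
     (is_value t0 -> exists v1, steps t1 v1 /\ is_value v1 /\ X_env X (ext E t0 v1)) /\
     (stuck t0 -> exists t1', steps t1 t1' /\ stuck t1' /\ X_env X (ext E t0 t1')) /\
     (forall t1', step t1 t1' -> exists t0', steps t0 t0' /\ X_tri X E t0' t1') /\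
     (is_value t1 -> exists v0, steps t0 v0 /\ is_value v0 /\ X_env X (ext E v0 t1)) /\
     (stuck t1 -> exists t0', steps t0 t0' /\ stuck t0' /\ X_env X (ext E t0' t1))) /\
  (forall E, X_env X E ->
     (forall b0 b1 v0 v1, E (Lam b0) (Lam b1) -> is_value v0 -> is_value v1 ->
        tilde E v0 v1 -> X_tri X E (subst 0 v0 b0) (subst 0 v1 b1)) /\
     (forall E0 E1 t0 t1 E0' E1',
        pure E0 -> pure E1 -> E (plug E0 (Shift t0)) (plug E1 (Shift t1)) ->
        pure E0' -> pure E1' -> hat E E0' E1' ->
        X_tri X E
          (Reset (subst 0 (Lam (Reset (plug (liftc 0 E0') (plug (liftc 0 E0) (Var 0))))) t0))
          (Reset (subst 0 (Lam (Reset (plug (liftc 0 E1') (plug (liftc 0 E1) (Var 0))))) t1)))).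

Definition empty_rel : Relation := fun _ _ => False.

(** t0 \approx_\emptyset t1: (\emptyset, t0, t1) belongs to the largest
    environmental bisimulation (= the union of all of them). *)
Definition approx_empty (t0 t1 : term) : Prop :=
  exists X, env_bisim X /\ X_tri X empty_rel t0 t1.

From Stdlib Require Import Arith Relations Lia.

(* Reduction is deterministic, since a term decomposes in at most one way as
   F[r] with r a redex.  Hence terms related by reduction in either direction
   reach the same normal forms, and relating them under environments that are
   the identity on closed normal forms is an environmental bisimulation: with
   an identity environment, applying related abstractions or capturing related
   continuations yields syntactically equal terms. *)

Fixpoint wfc (n : nat) (F : ctx) : Prop :=
  match F with
  | Hole => True
  | CAppR b F' => wf (S n) b /\ wfc n F'
  | CAppL F' u => wfc n F' /\ wf n u
  | CReset F' => wfc n F'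
  end.

Lemma wf_plug F n t : wf n (plug F t) <-> wfc n F /\ wf n t.
Proof. induction F; simpl; try rewrite IHF; tauto. Qed.

Lemma wf_lift t n k : wf n t -> wf (S n) (lift k t).
Proof.
  revert n k; induction t; simpl; intros m k H; intuition auto.
  destruct (Nat.ltb n k); simpl; lia.
Qed.

Lemma wfc_liftc F n k : wfc n F -> wfc (S n) (liftc k F).
Proof. induction F; simpl; intuition auto using wf_lift. Qed.

Lemma wf_subst t n k v : wf (S n) t -> wf n v -> k <= n -> wf n (subst k v t).
Proof.
  revert n k v; induction t; simpl; intros m k v Ht Hv Hk.
  - destruct (Nat.ltb_spec n k); simpl; [lia|].
    destruct (Nat.eqb_spec n k); simpl; [assumption | lia].
  - apply IHt; auto using wf_lift with arith.
  - destruct Ht; auto.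
  - apply IHt; auto using wf_lift with arith.
  - auto.
Qed.

Lemma step_closed a a' : step a a' -> closed a -> closed a'.
Proof.
  unfold closed; intros Hs Ha; destruct Hs; apply wf_plug in Ha; apply wf_plug;
    simpl in *.
  - intuition auto using wf_subst.
  - destruct Ha as [HF HE]; apply wf_plug in HE; simpl in HE.
    split; [assumption|].
    apply wf_subst; simpl; [tauto | | lia].
    apply wf_plug; simpl; intuition auto using wfc_liftc with arith.
  - assumption.
Qed.

Inductive redex : term -> Prop :=
| redex_beta t b : redex (App (Lam t) (Lam b))
| redex_shift E t : pure E -> redex (Reset (plug E (Shift t)))
| redex_reset b : redex (Reset (Lam b)).

Lemma plug_not_lam F r b : (forall b', r <> Lam b') -> plug F r <> Lam b.
Proof. destruct F; simpl; [auto | discriminate..]. Qed.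

Lemma redex_not_lam r b : redex r -> r <> Lam b.
Proof. destruct 1; discriminate. Qed.

Lemma plug_redex_not_lam F r b : redex r -> plug F r <> Lam b.
Proof. intros Hr; apply plug_not_lam; intros b'; exact (redex_not_lam _ b' Hr). Qed.

Lemma plug_shift_not_lam F t b : plug F (Shift t) <> Lam b.
Proof. apply plug_not_lam; discriminate. Qed.

Lemma plug_shift_inj E E' t t' :
  plug E (Shift t) = plug E' (Shift t') -> E = E' /\ t = t'.
Proof.
  revert E'; induction E; destruct E'; simpl; intros H; try discriminate;
    injection H; intros.
  - auto.
  - edestruct IHE; eauto; subst; auto.
  - exfalso; eapply plug_shift_not_lam; eauto.
  - exfalso; eapply plug_shift_not_lam; eauto.
  - edestruct IHE; eauto; subst; auto.
  - edestruct IHE; eauto; subst; auto.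
Qed.

Lemma pure_plug_shift_not_plug_redex E F t r :
  pure E -> redex r -> plug E (Shift t) <> plug F r.
Proof.
  revert F; induction E; destruct F; simpl; intros Hp Hr Heq;
    try discriminate; try contradiction.
  - subst; inversion Hr.
  - subst; inversion Hr; subst; eapply plug_shift_not_lam; eauto.
  - injection Heq; intros; subst; eapply IHE; eauto.
  - injection Heq; intros; eapply plug_redex_not_lam; eauto.
  - subst; inversion Hr; subst; eapply plug_shift_not_lam; eauto.
  - injection Heq; intros; eapply plug_shift_not_lam; eauto.
  - injection Heq; intros; eapply IHE; eauto.
Qed.

Lemma plug_redex_redex_hole F r r' : redex r -> redex r' -> plug F r = r' -> F = Hole.
Proof.
  intros Hr Hr'; destruct Hr'; destruct F; simpl; intros Heq;
    try reflexivity; try discriminate; injection Heq; intros; exfalso.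
  - eapply plug_redex_not_lam; eauto.
  - eapply plug_redex_not_lam; eauto.
  - eapply pure_plug_shift_not_plug_redex; eauto.
  - eapply plug_redex_not_lam; eauto.
Qed.

Lemma plug_redex_inj F F' r r' :
  redex r -> redex r' -> plug F r = plug F' r' -> F = F' /\ r = r'.
Proof.
  intros Hr Hr'; revert F'; induction F; intros F' H.
  - pose proof (plug_redex_redex_hole _ _ _ Hr' Hr (eq_sym H)); subst; auto.
  - destruct F'; [discriminate (plug_redex_redex_hole _ _ _ Hr Hr' H)|..];
      simpl in H; try discriminate; injection H; intros; subst.
    + edestruct IHF; eauto; subst; auto.
    + exfalso; eapply (plug_redex_not_lam _ r'); eauto.
  - destruct F'; [discriminate (plug_redex_redex_hole _ _ _ Hr Hr' H)|..];
      simpl in H; try discriminate; injection H; intros; subst.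
    + exfalso; eapply (plug_redex_not_lam _ r); eauto.
    + edestruct IHF; eauto; subst; auto.
  - destruct F'; [discriminate (plug_redex_redex_hole _ _ _ Hr Hr' H)|..];
      simpl in H; try discriminate; injection H; intros; subst.
    edestruct IHF; eauto; subst; auto.
Qed.

Lemma step_det a a1 a2 : step a a1 -> step a a2 -> a1 = a2.
Proof.
  intros H1 H2; destruct H1; inversion H2; subst;
  match goal with
  | H : plug ?F ?r = plug ?F' ?r' |- _ =>
      destruct (plug_redex_inj F F' r r') as [-> Hr];
      [constructor; assumption | constructor; assumption | exact H |];
      inversion Hr; subst
  end; auto.
  - match goal with
    | Hs : plug _ (Shift _) = plug _ (Shift _) |- _ =>
        destruct (plug_shift_inj _ _ _ _ Hs); subst; reflexivity
    end.
  - exfalso; eapply plug_shift_not_lam; eauto.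
  - exfalso; eapply plug_shift_not_lam; eauto.
Qed.

Lemma value_irreducible a a' : is_value a -> ~ step a a'.
Proof.
  intros [b ->] H; inversion H; eapply plug_redex_not_lam; eauto; constructor; auto.
Qed.

Lemma steps_irreducible a b : steps a b -> (forall a', ~ step a a') -> a = b.
Proof.
  intros H Hn; apply clos_rt_rt1n in H; destruct H; [reflexivity|].
  exfalso; eapply Hn; eauto.
Qed.

Lemma steps_step_det a b a' : steps a b -> step a a' -> a = b \/ steps a' b.
Proof.
  intros H Hs; apply clos_rt_rt1n in H; destruct H; [auto|].
  right; rewrite (step_det _ _ _ Hs H); apply clos_rt1n_rt; assumption.
Qed.

Definition id_env (E : Relation) : Prop :=
  forall x y, E x y -> x = y /\ closed x /\ normal x.

Definition reduction_related (E : Relation) (a b : term) : Prop :=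
  id_env E /\ closed a /\ closed b /\ (steps a b \/ steps b a).

Definition reduction_envrel : envrel :=
  {| X_env := id_env; X_tri := reduction_related |}.

Lemma id_env_is_env E : id_env E -> is_env E.
Proof.
  intros HE a b Hab; destruct (HE a b Hab) as [-> [Hc Hn]].
  unfold normal in *; tauto.
Qed.

Lemma id_env_ext E a : id_env E -> closed a -> normal a -> id_env (ext E a a).
Proof. intros HE Hc Hn x y [H | [-> ->]]; auto. Qed.

Lemma tclo_id_env E a b : id_env E -> tclo E a b -> a = b.
Proof. intros HE H; induction H; subst; auto; apply (HE _ _ H). Qed.

Lemma hat_id_env E F0 F1 : id_env E -> hat E F0 F1 -> F0 = F1 /\ wfc 0 F0.
Proof.
  intros HE H; induction H as [| ? ? ? ? ? [-> ?] [Ht [Hc _]]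
                              | ? ? ? ? ? [-> ?] [Ht [Hc _]] | ? ? ? [-> ?]];
    simpl; auto.
  - injection (tclo_id_env _ _ _ HE Ht) as ->; auto.
  - pose proof (tclo_id_env _ _ _ HE Ht); subst; auto.
Qed.

Lemma reduction_related_sym E a b :
  reduction_related E a b -> reduction_related E b a.
Proof. unfold reduction_related; tauto. Qed.

Lemma reduction_related_step E a b a' : reduction_related E a b -> step a a' ->
  exists b', steps b b' /\ reduction_related E a' b'.
Proof.
  intros [HE [Ha [Hb Hab]]] Hs; exists b; split; [apply rt_refl|].
  refine (conj HE (conj (step_closed _ _ Hs Ha) (conj Hb _))).
  destruct Hab as [Hab | Hba].
  - destruct (steps_step_det _ _ _ Hab Hs) as [<- | Hab'];
      [right; apply rt_step | left]; assumption.
  - right; eapply rt_trans; eauto using rt_step.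
Qed.

Lemma reduction_related_normal E a b : reduction_related E a b -> normal a ->
  steps b a /\ id_env (ext E a a).
Proof.
  intros [HE [Ha [Hb Hab]]] Hn; split; [|auto using id_env_ext].
  assert (Hirr : forall a', ~ step a a').
  { destruct Hn as [Hv | Hst]; [intros; apply value_irreducible; auto | apply Hst]. }
  destruct Hab as [Hab | Hba]; [|assumption].
  rewrite <- (steps_irreducible _ _ Hab Hirr); apply rt_refl.
Qed.

Lemma id_env_beta_related E b0 b1 v0 v1 : id_env E -> E (Lam b0) (Lam b1) ->
  tilde E v0 v1 -> reduction_related E (subst 0 v0 b0) (subst 0 v1 b1).
Proof.
  intros HE Hb [Hv [Hc _]].
  destruct (HE _ _ Hb) as [Heq [Hcb _]]; injection Heq as ->.
  pose proof (tclo_id_env _ _ _ HE Hv); subst v1.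
  assert (closed (subst 0 v0 b1)) by (apply wf_subst; auto).
  refine (conj HE (conj _ (conj _ (or_introl (rt_refl _ _ _))))); assumption.
Qed.

Lemma id_env_shift_related E E0 E1 t0 t1 E0' E1' : id_env E ->
  E (plug E0 (Shift t0)) (plug E1 (Shift t1)) -> hat E E0' E1' ->
  reduction_related E
    (Reset (subst 0 (Lam (Reset (plug (liftc 0 E0') (plug (liftc 0 E0) (Var 0))))) t0))
    (Reset (subst 0 (Lam (Reset (plug (liftc 0 E1') (plug (liftc 0 E1) (Var 0))))) t1)).
Proof.
  intros HE H01 Hh.
  destruct (HE _ _ H01) as [Heq [Hc _]].
  destruct (plug_shift_inj _ _ _ _ Heq) as [-> ->].
  destruct (hat_id_env _ _ _ HE Hh) as [-> HE1'].
  apply wf_plug in Hc; destruct Hc as [HE1 Ht1]; simpl in Ht1.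
  assert (closed (Reset (subst 0 (Lam (Reset (plug (liftc 0 E1')
                   (plug (liftc 0 E1) (Var 0))))) t1))).
  { apply wf_subst; simpl; [assumption | | lia].
    apply wf_plug; split; [apply wfc_liftc; assumption|].
    apply wf_plug; simpl; split; [apply wfc_liftc; assumption | lia]. }
  refine (conj HE (conj _ (conj _ (or_introl (rt_refl _ _ _))))); assumption.
Qed.

Lemma reduction_envrel_bisim : env_bisim reduction_envrel.
Proof.
  split; [|split]; simpl.
  - split; [exact id_env_is_env|].
    intros E t0 t1 [HE [? [? _]]]; auto using id_env_is_env.
  - intros E t0 t1 H.
    pose proof (reduction_related_sym _ _ _ H) as H'.
    repeat split.
    + intros t0'; apply reduction_related_step; assumption.
    + intros Hv; exists t0; split; [|split]; [..|assumption|];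
        apply (reduction_related_normal _ _ _ H); left; assumption.
    + intros Hs; exists t0; split; [|split]; [..|assumption|];
        apply (reduction_related_normal _ _ _ H); right; assumption.
    + intros t1' Hs; destruct (reduction_related_step _ _ _ _ H' Hs) as [b [? ?]].
      exists b; auto using reduction_related_sym.
    + intros Hv; exists t1; split; [|split]; [..|assumption|];
        apply (reduction_related_normal _ _ _ H'); left; assumption.
    + intros Hs; exists t1; split; [|split]; [..|assumption|];
        apply (reduction_related_normal _ _ _ H'); right; assumption.
  - intros E HE; split.
    + intros; apply id_env_beta_related; assumption.
    + intros; eapply id_env_shift_related; eassumption.
Qed.

Theorem lemma6 : forall t0 t0' : term,
  closed t0 -> closed t0' -> step t0 t0' -> approx_empty t0 t0'.
Proof.
  intros t0 t0' H0 H1 Hs; exists reduction_envrel; split;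
    [exact reduction_envrel_bisim|].
  refine (conj _ (conj H0 (conj H1 (or_introl (rt_step _ _ _ _ Hs))))).
  intros x y [].
Qed.
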